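(* Let $\mathcal{G}=\{U^g\mid g\in G=\mathbb{Z}_2^{\times(n-k)}\}$ be the stabilizer group of an $[[n,k]]$ Pauli stabilizer code, indexed so that $U^e=I^{\otimes n}$ and $U^gU^h=U^{gh}$. There exists a subset $R$ consisting of $n-k$ of the $n$ physical qubits such that 1. $\mathcal{G}_R=\{U^g_R\mid g\in G\}$ is a faithful, unitary, possibly projective representation of $G$ on $\mathcal{H}_R=(\mathbb{C}^2)^{\otimes(n-k)}$ satisfying $U^g_RU^{g'}_R=c(g,g')U^{gg'}_R$ with $c(g,g')\in\{\pm1,\pm i\}$, and 2. there exists a seed state $\ket{e}_R\in\mathcal{H}_R$ such that $\{\ket{g}_R=U^g_R\ket{e}_R\mid g\in G\}$ is an orthonormal basis of $\mathcal{H}_R$ that transforms as $U^g_R\ket{g'}_R=c(g,g')\ket{gg'}_R$.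
   Context: $\mathcal{P}_n$ is the $n$-qubit Pauli group (operators $i^\lambda O_1\otimes\cdots\otimes O_n$, $\lambda\in\{0,1,2,3\}$, $O_j\in\{I,X,Y,Z\}$). An $[[n,k]]$ Pauli stabilizer code is given by a faithful unitary representation $g\mapsto U^g\in\mathcal{P}_n$ of $G=\mathbb{Z}_2^{\times(n-k)}$ on $(\mathbb{C}^2)^{\otimes n}$ with $-I\notin\mathcal{G}$. For a subset $R$ of $n-k$ qubits with complement $S$ and a Pauli string $U^g=i^\lambda O_1\otimes\cdots\otimes O_n$, $U^g_R$ denotes the Pauli string $\bigotimes_{a\in R}O_a$ on the qubits of $R$ with the prefactor removed (equivalently $U^g_R=2^{-k}\mathrm{Tr}_S[\pi_S(U^g)]$, where $\pi_S$ replaces the letters on $S$ by $I$ and removes the prefactor). The phases $c(g,g')$ are defined by $U^g_RU^{g'}_R=c(g,g')U^{gg'}_R$. *)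

From HB Require Import structures.
From mathcomp Require Import all_boot all_order all_algebra all_field.
Set Implicit Arguments. Unset Strict Implicit. Unset Printing Implicit Defensive.
Import Order.TTheory GRing.Theory Num.Theory.
Local Open Scope ring_scope.

Inductive pauli := PI | PX | PY | PZ.

Definition pauli_code (p : pauli) : 'I_4 :=
  match p with PI => inord 0 | PX => inord 1 | PY => inord 2 | PZ => inord 3 end.
Definition code_pauli (i : 'I_4) : pauli :=
  match val i with 0 => PI | 1 => PX | 2 => PY | _ => PZ end.
Lemma pauli_codeK : cancel pauli_code code_pauli.
Proof. by case; rewrite /code_pauli /= inordK. Qed.
HB.instance Definition _ := Finite.copy pauli (can_type pauli_codeK).

(* Matrix entries <b|O|b'> of the Pauli letters in the computational basis
   (false = |0>, true = |1>). Y = [[0,-i],[i,0]]. *)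
Definition pauli_entry (p : pauli) (b b' : bool) : algC :=
  match p, b, b' with
  | PI, false, false => 1 | PI, true, true => 1
  | PX, false, true => 1 | PX, true, false => 1
  | PY, false, true => - 'i | PY, true, false => 'i
  | PZ, false, false => 1 | PZ, true, true => -1
  | _, _, _ => 0
  end.

(* Hilbert space of a finite set Q of qubits: (C^2)^{(x) Q}, with the
   computational basis indexed by bit strings {ffun Q -> bool}. *)
Definition hdim (Q : finType) : nat := #|{ffun Q -> bool}|.
Definition op (Q : finType) := 'M[algC]_(hdim Q).
Definition ket (Q : finType) := 'cV[algC]_(hdim Q).

Definition bits (Q : finType) (i : 'I_(hdim Q)) : {ffun Q -> bool} :=
  @enum_val {ffun Q -> bool} {: {ffun Q -> bool}} i.

Definition pstr_mx (Q : finType) (s : {ffun Q -> pauli}) : op Q :=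
  \matrix_(i, j) \prod_(q : Q)
     pauli_entry (s q) (bits i q) (bits j q).

Record pauli_op (n : nat) := PauliOp {
  pphase : 'I_4;
  pletters : {ffun 'I_n -> pauli} }.

Definition pauli_mx (n : nat) (P : pauli_op n) : op 'I_n :=
  ('i ^+ pphase P) *: pstr_mx (pletters P).

(* The stabilizer group is indexed by G = Z_2^{n-k}, written additively
   as row vectors over F_2 (so the group product gh is g + h, e is 0). *)
Definition Zgrp (m : nat) := 'rV['F_2]_m.

Definition stabilizer_code (n k : nat) (U : Zgrp (n - k) -> pauli_op n) : Prop :=
  [/\ pauli_mx (U 0) = 1%:M,
      (forall g h, pauli_mx (U (g + h)) = pauli_mx (U g) *m pauli_mx (U h)),
      injective (fun g => pauli_mx (U g)) &
      (forall g, pauli_mx (U g) <> - 1%:M)].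

(* Restriction U_R of a Pauli operator to a subset R of qubits: the letters
   on R, with the prefactor removed, acting on H_R. *)
Definition qubits_of (n : nat) (R : {set 'I_n}) : finType := {q : 'I_n | q \in R}.

Definition restr (n : nat) (R : {set 'I_n}) (P : pauli_op n) : op (qubits_of R) :=
  pstr_mx [ffun q : qubits_of R => pletters P (val q)].

Definition adjmx (m p : nat) (A : 'M[algC]_(m, p)) : 'M[algC]_(p, m) :=
  (map_mx Num.conj A)^T.
Definition dotv (m : nat) (u v : 'cV[algC]_m) : algC := (adjmx u *m v) 0 0.

(* The letters of the stabilizers, with phases forgotten, form a homomorphism
   from G to Pauli strings; it is injective because -I is not a stabilizer,
   and its image consists of pairwise commuting strings.  Peel off the qubits
   one at a time: if some stabilizer acts nontrivially on qubit q, pick a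
   letter L_q anticommuting with its letter there and pass to the index-2
   subgroup whose letter at q commutes with L_q.  Forgetting q keeps this
   subgroup faithful, because an element acting only by L_q at q would
   anticommute with the first stabilizer.  This produces n-k qubits R and
   letters L_q such that every nontrivial stabilizer anticommutes with L_q at
   some q in R.  The seed |e>_R is the product of +1 eigenvectors of the L_q:
   <e|U^g_R U^g'_R|e> vanishes for g <> g' because U^{gg'}_R flips the sign
   of some L_q, and 2^(n-k) orthonormal vectors span H_R. *)

From HB Require Import structures.
From mathcomp Require Import all_boot all_order all_algebra all_field ring.
Set Implicit Arguments. Unset Strict Implicit. Unset Printing Implicit Defensive.
Import Order.TTheory GRing.Theory Num.Theory.
Local Open Scope ring_scope.

Definition pauli_mul (a b : pauli) : pauli :=
  match a, b with
  | PI, c | c, PI => c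
  | PX, PX | PY, PY | PZ, PZ => PI
  | PX, PY | PY, PX => PZ
  | PY, PZ | PZ, PY => PX
  | PZ, PX | PX, PZ => PY
  end.

Definition pauli_phase (a b : pauli) : algC :=
  match a, b with
  | PX, PY | PY, PZ | PZ, PX => 'i
  | PY, PX | PZ, PY | PX, PZ => - 'i
  | _, _ => 1
  end.

Definition pauli_anti (a b : pauli) : bool :=
  match a, b with
  | PX, PY | PY, PZ | PZ, PX | PY, PX | PZ, PY | PX, PZ => true
  | _, _ => false
  end.

Lemma pauli_entry_mul a b x y :
  \sum_c pauli_entry a x c * pauli_entry b c y =
  pauli_phase a b * pauli_entry (pauli_mul a b) x y.
Proof.
rewrite big_bool; case: a; case: b; case: x; case: y;
  by rewrite /= ?(mul0r, mulr0, mul1r, mulr1, addr0, add0r, mulrN, mulNr, opprK, mulCii).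
Qed.

Lemma pauli_phase_swap a b :
  pauli_phase a b = (-1) ^+ pauli_anti a b * pauli_phase b a.
Proof. by case: a; case: b; rewrite /= ?expr0 ?expr1 ?mul1r ?mulN1r ?opprK. Qed.

Lemma conj_pauli_entry a x y : (pauli_entry a x y)^* = pauli_entry a y x.
Proof.
by case: a; case: x; case: y; rewrite /= ?rmorph0 ?rmorphN /= ?rmorph1 ?conjCi ?opprK.
Qed.

Lemma pauli_trace_eq0 a : a <> PI -> \sum_b pauli_entry a b b = 0.
Proof. by rewrite big_bool; case: a => //= _; rewrite ?addr0 ?addNr. Qed.

Lemma pauli_mulC : commutative pauli_mul.
Proof. by case; case. Qed.

Lemma pauli_mulss a : pauli_mul a a = PI.
Proof. by case: a. Qed.

Lemma pauli_mul_eqI a b : pauli_mul a b = PI -> a = b.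
Proof. by case: a; case: b. Qed.

Lemma pauli_phasess a : pauli_phase a a = 1.
Proof. by case: a. Qed.

Lemma pauli_phase_neq0 a b : pauli_phase a b != 0.
Proof. by case: a; case: b; rewrite /= ?oner_eq0 ?oppr_eq0 ?neq0Ci. Qed.

Lemma pauli_antiC : commutative pauli_anti.
Proof. by case; case. Qed.

Lemma pauli_antiIr a : pauli_anti a PI = false.
Proof. by case: a. Qed.

Lemma pauli_anti_mulr a b c :
  pauli_anti a (pauli_mul b c) = pauli_anti a b (+) pauli_anti a c.
Proof. by case: a; case: b; case: c. Qed.

Lemma pauli_commute_eq a b : a <> PI -> b <> PI -> ~~ pauli_anti a b -> b = a.
Proof. by case: a; case: b. Qed.

Lemma pauli_commute_trans a b c : a <> PI ->
  ~~ pauli_anti a b -> ~~ pauli_anti a c -> ~~ pauli_anti b c.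
Proof. by case: a; case: b; case: c. Qed.

Definition anti_partner (a : pauli) : pauli := if a is PZ then PX else PZ.

Lemma anti_partnerP a : a <> PI -> pauli_anti (anti_partner a) a.
Proof. by case: a. Qed.

Lemma anti_partner_neqI a : anti_partner a <> PI.
Proof. by case: a. Qed.

Definition fourth_roots : seq algC := [:: 1; -1; 'i; - 'i].

Lemma pauli_phase_root a b : pauli_phase a b \in fourth_roots.
Proof. by case: a; case: b; rewrite !inE eqxx ?orbT. Qed.

Lemma fourth_rootsM x y :
  x \in fourth_roots -> y \in fourth_roots -> x * y \in fourth_roots.
Proof.
by rewrite !inE => /or4P[]/eqP-> /or4P[]/eqP->;
  rewrite ?(mul1r, mulr1, mulN1r, mulrN1, mulrN, mulNr, opprK, mulCii, eqxx, orbT).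
Qed.

Lemma sum_bits_prod (Q : finType) (F : Q -> bool -> algC) :
  \sum_(i < hdim Q) \prod_q F q (bits i q) = \prod_q \sum_b F q b.
Proof.
rewrite bigA_distr_bigA (reindex (@bits Q)) //=.
by exists (@enum_rank _) => x _; [apply: enum_valK | apply: enum_rankK].
Qed.

Lemma hdim_gt0 (Q : finType) : (0 < hdim Q)%N.
Proof. by rewrite /hdim card_ffun card_bool expn_gt0. Qed.

Section PauliStrings.
Variable Q : finType.
Implicit Types s t : {ffun Q -> pauli}.

Definition str_one : {ffun Q -> pauli} := [ffun => PI].
Definition str_mul s t : {ffun Q -> pauli} := [ffun q => pauli_mul (s q) (t q)].
Definition str_phase s t : algC := \prod_q pauli_phase (s q) (t q).
Definition str_anti s t : bool := \big[addb/false]_q pauli_anti (s q) (t q).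

Lemma str_mulC : commutative str_mul.
Proof. by move=> s t; apply/ffunP => q; rewrite !ffunE pauli_mulC. Qed.

Lemma str_mulss s : str_mul s s = str_one.
Proof. by apply/ffunP => q; rewrite !ffunE pauli_mulss. Qed.

Lemma str_mul_eq1 s t : str_mul s t = str_one -> s = t.
Proof.
move=> st1; apply/ffunP => q; apply: pauli_mul_eqI.
by have := congr1 (fun u : {ffun Q -> pauli} => u q) st1; rewrite !ffunE.
Qed.

Lemma str_phasess s : str_phase s s = 1.
Proof. by apply: big1 => q _; apply: pauli_phasess. Qed.

Lemma str_phase_neq0 s t : str_phase s t != 0.
Proof. by apply/prodf_neq0 => q _; apply: pauli_phase_neq0. Qed.

Lemma str_phase_root s t : str_phase s t \in fourth_roots.
Proof.
apply: (big_ind (fun x => x \in fourth_roots)); first by rewrite inE eqxx.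
  exact: fourth_rootsM.
by move=> q _; apply: pauli_phase_root.
Qed.

Lemma str_phase_swap s t :
  str_phase s t = (-1) ^+ str_anti s t * str_phase t s.
Proof.
rewrite /str_anti (big_morph (fun b : bool => (-1) ^+ b : algC)
  (id1 := 1) (op1 := *%R) (id2 := false) (op2 := addb) (signr_addb _) (expr0 _)).
by rewrite -big_split; apply: eq_bigr => q _; apply: pauli_phase_swap.
Qed.

Lemma pstr_mxM s t :
  pstr_mx s *m pstr_mx t = str_phase s t *: pstr_mx (str_mul s t).
Proof.
apply/matrixP => i j; rewrite !mxE /str_phase -big_split /=.
under [RHS]eq_bigr => q _ do rewrite ffunE -pauli_entry_mul.
by rewrite -sum_bits_prod; apply: eq_bigr => l _; rewrite !mxE -big_split.
Qed.

Lemma pstr_mx1 : pstr_mx str_one = 1%:M.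
Proof.
apply/matrixP => i j; rewrite !mxE; under eq_bigr do rewrite ffunE.
have [<- | nij] := eqVneq i j; first by rewrite big1 // => q _; case: (bits i q).
have /existsP[q] : [exists q, bits i q != bits j q].
  rewrite -negb_forall; apply: contra nij => /forallP eq_ij.
  by apply/eqP/enum_val_inj/ffunP => q; apply/eqP.
by rewrite (bigD1 q) //=; case: (bits i q); case: (bits j q); rewrite // mul0r.
Qed.

Lemma adjmx_pstr s : adjmx (pstr_mx s) = pstr_mx s.
Proof.
apply/matrixP => i j; rewrite !mxE rmorph_prod.
by apply: eq_bigr => q _; apply: conj_pauli_entry.
Qed.

Lemma pstr_mx_sq s : pstr_mx s *m pstr_mx s = 1%:M.
Proof. by rewrite pstr_mxM str_mulss pstr_mx1 str_phasess scale1r. Qed.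

Lemma pstr_mx_neq0 s : pstr_mx s != 0.
Proof.
apply/eqP => s0; have := pstr_mx_sq s; rewrite s0 mul0mx.
move=> /matrixP /(_ (Ordinal (hdim_gt0 Q)) (Ordinal (hdim_gt0 Q))).
by rewrite !mxE eqxx => /esym/eqP; rewrite oner_eq0.
Qed.

Lemma mxtrace_pstr_eq0 s : s <> str_one -> \tr (pstr_mx s) = 0.
Proof.
move=> s_neq1; have /existsP[q /eqP sq] : [exists q, s q != PI].
  apply: contraT => /existsPn s1; case: s_neq1.
  by apply/ffunP => q; rewrite ffunE; apply/eqP/negbNE/s1.
rewrite /mxtrace; under eq_bigr => i _ do rewrite mxE.
rewrite (sum_bits_prod (fun q b => pauli_entry (s q) b b)).
by rewrite (bigD1 q) //= pauli_trace_eq0 // mul0r.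
Qed.

Lemma pstr_mx_scale_inj (a b : algC) s t :
  a != 0 -> a *: pstr_mx s = b *: pstr_mx t -> s = t.
Proof.
move=> a0 ast; apply/esym/str_mul_eq1/eqP; apply: contraLR a0 => /negP ts1.
have /(congr1 mxtrace) := congr1 (mulmx^~ (pstr_mx s)) ast.
rewrite -!scalemxAl pstr_mx_sq pstr_mxM !mxtraceZ mxtrace_pstr_eq0; last by move/eqP.
by rewrite mxtrace1 !mulr0 => /eqP; rewrite mulf_eq0 pnatr_eq0 eqn0Ngt hdim_gt0 orbF => ->.
Qed.

End PauliStrings.

Arguments str_one {Q}.

Lemma str_morph0 (G : zmodType) (I : finType) (phi : G -> {ffun I -> pauli}) :
  {morph phi : g h / g + h >-> str_mul g h} -> phi 0 = str_one.
Proof. by move=> phiD; rewrite -(str_mulss (phi 0)) -phiD addr0. Qed.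

Lemma card_parity_ker (G : finZmodType) (H : {set G}) (f : G -> bool) (h0 : G) :
  h0 \in H -> f h0 ->
  {in H &, forall g h, g + h \in H} ->
  {in H &, forall g h, f (g + h) = f g (+) f h} ->
  #|H| = (2 * #|[set h in H | ~~ f h]|)%N.
Proof.
move=> h0H fh0 addH fD; pose A b := [set h in H | f h == b].
have shift b : (#|A b| <= #|A (~~ b)|)%N.
  rewrite -(card_imset _ (addIr h0)); apply/subset_leq_card/subsetP => _ /imsetP[h + ->].
  by rewrite !inE => /andP[hH /eqP fh]; rewrite addH // fD // fh fh0 addbT eqxx.
have cardA : #|A true| = #|A false|.
  by apply/eqP; rewrite eqn_leq; apply/andP; split; [apply: shift | apply: (shift false)].
rewrite -(cardsID [set h | f h] H) mul2n -addnn.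
have -> : H :&: [set h | f h] = A true by apply/setP => h; rewrite !inE eqb_id.
have -> : H :\: [set h | f h] = A false by apply/setP => h; rewrite !inE eqbF_neg andbC.
have -> : [set h in H | ~~ f h] = A false by apply/setP => h; rewrite !inE eqbF_neg.
by rewrite cardA.
Qed.

Section DetectingQubits.
Variables (G : finZmodType) (I : finType) (phi : G -> {ffun I -> pauli}).
Hypothesis phiD : {morph phi : g h / g + h >-> str_mul g h}.

Definition faithful_commuting_on (W : {set I}) (H : {set G}) : Prop :=
  [/\ 0 \in H, {in H &, forall g h, g + h \in H},
      {in H, forall h, {in W, forall q, phi h q = PI} -> h = 0} &
      {in H &, forall g h, ~~ \big[addb/false]_(q in W) pauli_anti (phi g q) (phi h q)}].

Definition detected_by (W : {set I}) (H : {set G}) (R : {set I}) (L : I -> pauli) : Prop :=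
  [/\ R \subset W, (2 ^ #|R|)%N = #|H| &
      {in H, forall h, h != 0 -> exists2 q, q \in R & pauli_anti (L q) (phi h q)}].

Definition commuting_at (q : I) (a : pauli) (H : {set G}) : {set G} :=
  [set h in H | ~~ pauli_anti a (phi h q)].

Lemma detected_by_set0 (H : {set G}) L :
  faithful_commuting_on set0 H -> detected_by set0 H set0 L.
Proof.
case=> H0 _ ker _; have H_eq0 : {in H, forall h, h = 0}.
  by move=> h hH; apply: ker => // q; rewrite inE.
split; [exact: sub0set | | by move=> h /H_eq0 ->; rewrite eqxx].
rewrite cards0 (_ : H = [set 0]) ?cards1 //.
by apply/setP => h; rewrite inE; apply/idP/eqP => [/H_eq0 | ->].
Qed.

Lemma faithful_commuting_drop (W : {set I}) (H : {set G}) q :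
  q \in W -> {in H, forall h, phi h q = PI} ->
  faithful_commuting_on W H -> faithful_commuting_on (W :\ q) H.
Proof.
move=> qW Hq [H0 addH ker comm]; split=> // [h hH hW | g h gH hH].
  apply: ker => // q' q'W; have [-> | q'q] := eqVneq q' q; first exact: Hq.
  by apply: hW; rewrite !inE q'q.
by have := comm g h gH hH; rewrite (big_setD1 q) //= !Hq // pauli_antiIr.
Qed.

Lemma faithful_commuting_split (W : {set I}) (H : {set G}) q h1 :
  q \in W -> h1 \in H -> phi h1 q <> PI ->
  faithful_commuting_on W H ->
  faithful_commuting_on (W :\ q) (commuting_at q (anti_partner (phi h1 q)) H).
Proof.
set a := anti_partner _ => qW h1H h1q [H0 addH ker comm].
have aI : a <> PI by apply: anti_partner_neqI.
split=> [|g h|h|g h]; rewrite ?inE.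
- by rewrite H0 (str_morph0 phiD) ffunE pauli_antiIr.
- move=> /andP[gH ga] /andP[hH ha].
  by rewrite addH // phiD ffunE pauli_anti_mulr (negPf ga) (negPf ha).
- move=> /andP[hH ha] hW.
  (* Otherwise h acts on W only by [a] at [q], hence anticommutes with [h1]. *)
  have hq : phi h q = PI.
    apply/eqP/contraT => /eqP /(pauli_commute_eq aI) /(_ ha) ha'.
    have := comm h1 h h1H hH; rewrite (big_setD1 q) //= ha' pauli_antiC.
    rewrite (anti_partnerP h1q) big1 // => q' q'W.
    by rewrite hW // pauli_antiIr.
  apply: ker => // q' q'W; have [-> // | q'q] := eqVneq q' q.
  by apply: hW; rewrite !inE q'q.
- move=> /andP[gH ga] /andP[hH ha]; have := comm g h gH hH.
  by rewrite (big_setD1 q) //= (negPf (pauli_commute_trans aI ga ha)).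
Qed.

Lemma detected_by_drop (W : {set I}) (H : {set G}) q R L :
  detected_by (W :\ q) H R L -> detected_by W H R L.
Proof. by case=> RW cardR det; split=> //; apply: subset_trans RW (subsetDl _ _). Qed.

Lemma detected_by_split (W : {set I}) (H : {set G}) q h1 R L :
  q \in W -> h1 \in H -> phi h1 q <> PI -> faithful_commuting_on W H ->
  let a := anti_partner (phi h1 q) in
  detected_by (W :\ q) (commuting_at q a H) R L ->
  detected_by W H (q |: R) (fun q' => if q' == q then a else L q').
Proof.
move=> qW h1H h1q [_ addH _ _] a [RW cardR det].
have qR : q \notin R by apply/negP => /(subsetP RW); rewrite !inE eqxx.
split.
- by rewrite subUset sub1set qW (subset_trans RW (subsetDl _ _)).
- rewrite cardsU1 qR expnS cardR.
  rewrite (@card_parity_ker _ H (fun h => pauli_anti a (phi h q)) h1) //.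
    exact: anti_partnerP.
  by move=> g h gH hH; rewrite phiD ffunE pauli_anti_mulr.
- move=> h hH h0; have [ah | ah] := boolP (pauli_anti a (phi h q)).
    by exists q; rewrite ?setU11 ?eqxx.
  have hH' : h \in commuting_at q a H by rewrite inE hH ah.
  have [q' q'R aq'] := det h hH' h0.
  exists q'; first by rewrite setU1r.
  by rewrite ifN //; apply: contraNneq qR => <-.
Qed.

Lemma exists_detecting_qubits (W : {set I}) (H : {set G}) :
  faithful_commuting_on W H -> exists R L, detected_by W H R L.
Proof.
have [N] := ubnP #|W|; elim: N W H => // N IH W H ltWN fcWH.
have [W0 | [q qW]] := set_0Vmem W.
  by rewrite W0 in fcWH *; exists set0, (fun=> PI); apply: detected_by_set0.
have ltW'N : (#|W :\ q| < N)%N by move: ltWN; rewrite (cardsD1 q W) qW.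
case: (boolP [exists h in H, phi h q != PI]).
  move=> /exists_inP[h1 h1H /eqP h1q].
  have [R [L detR]] := IH _ _ ltW'N (faithful_commuting_split qW h1H h1q fcWH).
  exists (q |: R), (fun q' => if q' == q then anti_partner (phi h1 q) else L q').
  exact: detected_by_split detR.
move=> /exists_inP noq; have Hq : {in H, forall h, phi h q = PI}.
  by move=> h hH; apply/eqP/contraT => hq; case: noq; exists h.
have [R [L detR]] := IH _ _ ltW'N (faithful_commuting_drop qW Hq fcWH).
by exists R, L; apply: detected_by_drop detR.
Qed.

End DetectingQubits.

Lemma scaler_injl (F : fieldType) (V : lmodType F) (v : V) (a b : F) :
  v != 0 -> a *: v = b *: v -> a = b.
Proof.
move=> v0 abv; apply/eqP; rewrite -subr_eq0.
have /eqP := subrr (b *: v); rewrite -{1}abv -scalerBl scaler_eq0.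
by rewrite (negPf v0) orbF.
Qed.

Lemma Zgrp_addrr m (g : Zgrp m) : g + g = 0.
Proof. by rewrite -mulr2n -scaler_nat pchar_Fp_0 ?scale0r. Qed.

Lemma Zgrp_addr_eq0 m (g h : Zgrp m) : (g + h == 0) = (g == h).
Proof. by rewrite -(inj_eq (addIr h)) -addrA Zgrp_addrr addr0 add0r. Qed.

Lemma card_Zgrp m : #|Zgrp m| = (2 ^ m)%N.
Proof. by rewrite card_mx card_Fp // mul1n. Qed.

Lemma pauli_mxM n (P P' : pauli_op n) :
  pauli_mx P *m pauli_mx P' =
  ('i ^+ pphase P * 'i ^+ pphase P' * str_phase (pletters P) (pletters P'))
    *: pstr_mx (str_mul (pletters P) (pletters P')).
Proof. by rewrite /pauli_mx -scalemxAl -scalemxAr pstr_mxM !scalerA. Qed.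

Section StabilizerLetters.
Variables (n m : nat) (U : Zgrp m -> pauli_op n).
Hypotheses (U0 : pauli_mx (U 0) = 1%:M)
  (UM : forall g h, pauli_mx (U (g + h)) = pauli_mx (U g) *m pauli_mx (U h))
  (U_inj : injective (fun g => pauli_mx (U g)))
  (U_neqN1 : forall g, pauli_mx (U g) <> - 1%:M).

Local Notation s g := (pletters (U g)).
Local Notation z g := ('i ^+ pphase (U g) : algC).

Let z_neq0 g : z g != 0.
Proof. by rewrite expf_neq0 ?neq0Ci. Qed.

Lemma letters_mul : {morph (fun g => s g) : g h / g + h >-> str_mul g h}.
Proof. by move=> g h; have := UM g h; rewrite pauli_mxM; apply: pstr_mx_scale_inj. Qed.

Lemma letters_eq1 g : s g = str_one -> g = 0.
Proof.
move=> sg1; have Ug : pauli_mx (U g) = z g *: 1%:M by rewrite /pauli_mx sg1 pstr_mx1.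
have : z g ^+ 2 = 1.
  apply: (scaler_injl (v := 1%:M : op 'I_n)); first by rewrite -pstr_mx1 pstr_mx_neq0.
  by rewrite scale1r -[RHS]U0 -(Zgrp_addrr g) UM Ug -scalemxAl -scalemxAr mul1mx scalerA.
move/eqP; rewrite sqrf_eq1 => /orP[]/eqP zg.
  by apply: U_inj; rewrite /= Ug zg scale1r U0.
by have := @U_neqN1 g; rewrite Ug zg scaleN1r.
Qed.

Lemma letters_commute g h : ~~ str_anti (s g) (s h).
Proof.
have : pauli_mx (U g) *m pauli_mx (U h) = pauli_mx (U h) *m pauli_mx (U g).
  by rewrite -!UM addrC.
rewrite !pauli_mxM [str_mul (s h) _]str_mulC.
move=> /(scaler_injl (pstr_mx_neq0 _)); rewrite [z h * _]mulrC -!mulrA.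
move=> /(mulfI (z_neq0 g)) /(mulfI (z_neq0 h)).
rewrite str_phase_swap -[RHS]mul1r => /(mulIf (str_phase_neq0 _ _)).
by move=> /(@signr_inj _ _ false) ->.
Qed.

Lemma letters_faithful_commuting :
  faithful_commuting_on (fun g => s g) [set: 'I_n] [set: Zgrp m].
Proof.
split=> [|g h _ _|h _ h1|g h _ _]; rewrite ?inE //.
  by apply: letters_eq1; apply/ffunP => q; rewrite ffunE h1 ?inE.
by have := letters_commute g h; rewrite /str_anti (eq_bigl _ _ (@in_setT _)).
Qed.

End StabilizerLetters.

Definition inv_sqrt2 : algC := (sqrtC 2)^-1.

Lemma conj_inv_sqrt2 : inv_sqrt2^* = inv_sqrt2.
Proof. by rewrite /inv_sqrt2 fmorphV /= geC0_conj // sqrtC_ge0 ler0n. Qed.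

Lemma inv_sqrt2_sq : 2 * (inv_sqrt2 * inv_sqrt2) = 1.
Proof. by rewrite /inv_sqrt2 -invfM -expr2 sqrtCK divff // pnatr_eq0. Qed.

(* A unit +1 eigenvector of the letter [a], in the computational basis. *)
Definition eigvec_amp (a : pauli) (b : bool) : algC :=
  match a, b with
  | PX, _ | PY, false => inv_sqrt2
  | PY, true => 'i * inv_sqrt2
  | _, false => 1
  | _, true => 0
  end.

Definition qubit_expect (a c : pauli) : algC :=
  \sum_b \sum_b' (eigvec_amp a b)^* * pauli_entry c b b' * eigvec_amp a b'.

Ltac expect_simpl :=
  rewrite /qubit_expect !big_bool /= ?rmorphM ?rmorphN /=;
  rewrite ?conjCi ?conj_inv_sqrt2 ?rmorph1 ?rmorph0;
  ring: (@mulCii algC) inv_sqrt2_sq.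

Lemma qubit_expectI a : qubit_expect a PI = 1.
Proof. by case: a; expect_simpl. Qed.

Lemma qubit_expect_anti a c : pauli_anti a c -> qubit_expect a c = 0.
Proof. by case: a; case: c => //= _; expect_simpl. Qed.

Lemma adjmxM (p q r : nat) (A : 'M[algC]_(p, q)) (B : 'M[algC]_(q, r)) :
  adjmx (A *m B) = adjmx B *m adjmx A.
Proof. by rewrite /adjmx map_mxM trmx_mul. Qed.

Lemma dotv_mull (p : nat) (A : 'M[algC]_p) (x y : 'cV[algC]_p) :
  dotv (A *m x) y = dotv x (adjmx A *m y).
Proof. by rewrite /dotv adjmxM mulmxA. Qed.

Lemma orthonormal_expansion (N : nat) (T : finType) (f : T -> 'cV[algC]_N) :
  #|T| = N -> (forall x y, dotv (f x) (f y) = (x == y)%:R) ->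
  forall v, v = \sum_x dotv (f x) v *: f x.
Proof.
move=> cardT orth v; subst N.
pose M : 'M[algC]_#|T| := \matrix_(i, j) f (enum_val j) i 0.
have MM1 : M *m adjmx M = 1%:M.
  apply: mulmx1C; apply/matrixP => j j'.
  rewrite !mxE -[j == j'](inj_eq enum_val_inj) -orth /dotv !mxE.
  by apply: eq_bigr => i _; rewrite !mxE.
apply/colP => i; rewrite -[v in LHS]mul1mx -MM1 -mulmxA summxE big_enum_val !mxE.
apply: eq_bigr => j _; rewrite !mxE mulrC /dotv !mxE; congr (_ * _).
by apply: eq_bigr => k _; rewrite !mxE.
Qed.

Section SeedState.
Variables (Q : finType) (L : Q -> pauli).

Definition seed : ket Q := \col_i \prod_q eigvec_amp (L q) (bits i q).

Lemma dotv_seed u : dotv seed (pstr_mx u *m seed) = \prod_q qubit_expect (L q) (u q).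
Proof.
rewrite /dotv /qubit_expect mxE -sum_bits_prod; apply: eq_bigr => i _.
rewrite -(sum_bits_prod (fun q b' => (eigvec_amp (L q) (bits i q))^* *
  pauli_entry (u q) (bits i q) b' * eigvec_amp (L q) b')).
rewrite !mxE mulr_sumr; apply: eq_bigr => j _; rewrite !mxE rmorph_prod -!big_split.
by apply: eq_bigr => q _; rewrite /= mulrA.
Qed.

Lemma dotv_pstr_seed s t :
  dotv (pstr_mx s *m seed) (pstr_mx t *m seed) =
  str_phase s t * \prod_q qubit_expect (L q) (str_mul s t q).
Proof.
rewrite dotv_mull adjmx_pstr mulmxA pstr_mxM -scalemxAl.
by rewrite /dotv -scalemxAr mxE -/(dotv _ _) dotv_seed.
Qed.

End SeedState.

Section DetectedRepresentation.
Variables (m : nat) (Q : finType) (s : Zgrp m -> {ffun Q -> pauli}) (L : Q -> pauli).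
Hypotheses (sD : {morph s : g h / g + h >-> str_mul g h})
  (s_detect : forall g, g != 0 -> exists q, pauli_anti (L q) (s g q)).

Lemma detected_eq1 g : s g = str_one -> g = 0.
Proof.
by move=> sg1; apply/eqP/contraT => /s_detect[q]; rewrite sg1 ffunE pauli_antiIr.
Qed.

Lemma detected_inj : injective s.
Proof.
move=> g h sgh; apply/eqP; rewrite -Zgrp_addr_eq0.
by apply/eqP/detected_eq1; rewrite sD sgh str_mulss.
Qed.

Lemma pstr_detected_inj : injective (fun g => pstr_mx (s g)).
Proof.
move=> g h /= E; apply: detected_inj.
by apply: (@pstr_mx_scale_inj _ 1 1); rewrite ?oner_neq0 ?scale1r.
Qed.

Lemma pstr_detected_scalar g a : pstr_mx (s g) = a%:M -> g = 0.
Proof.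
move=> E; apply: detected_eq1; apply: (@pstr_mx_scale_inj _ 1 a).
  exact: oner_neq0.
by rewrite scale1r E pstr_mx1 scalemx1.
Qed.

Lemma seed_orthonormal g g' :
  dotv (pstr_mx (s g) *m seed L) (pstr_mx (s g') *m seed L) = (g == g')%:R.
Proof.
rewrite dotv_pstr_seed -sD; have [<- | ne] := eqVneq g g'.
  rewrite Zgrp_addrr str_phasess mul1r; apply: big1 => q _.
  by rewrite (str_morph0 sD) ffunE qubit_expectI.
have [q aq] : exists q, pauli_anti (L q) (s (g + g') q).
  by apply: s_detect; rewrite Zgrp_addr_eq0.
by rewrite (bigD1 q) //= qubit_expect_anti // mul0r mulr0.
Qed.

End DetectedRepresentation.

Definition restrict_str n (R : {set 'I_n}) (s : {ffun 'I_n -> pauli}) :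
  {ffun qubits_of R -> pauli} := [ffun q => s (val q)].

Lemma restrict_str_mul n (R : {set 'I_n}) s t :
  restrict_str R (str_mul s t) = str_mul (restrict_str R s) (restrict_str R t).
Proof. by apply/ffunP => q; rewrite !ffunE. Qed.

Lemma hdim_qubits_of n (R : {set 'I_n}) : hdim (qubits_of R) = (2 ^ #|R|)%N.
Proof.
rewrite /hdim card_ffun card_bool card_sig.
by congr (_ ^ _)%N; apply: eq_card => q; rewrite inE.
Qed.

Theorem mainTheorem3 (n k : nat) (hk : (k <= n)%N)
    (U : Zgrp (n - k) -> pauli_op n) (hU : stabilizer_code U) :
  exists R : {set 'I_n}, #|R| = (n - k)%N /\
  exists c : Zgrp (n - k) -> Zgrp (n - k) -> algC,
    (* 1. G_R is a faithful unitary projective representation with cocycle c *)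
    [/\ (forall g g', restr R (U g) *m restr R (U g') = c g g' *: restr R (U (g + g'))),
        (forall g g', c g g' \in [:: 1; -1; 'i; - 'i]),
        (forall g, restr R (U g) *m adjmx (restr R (U g)) = 1%:M),
        injective (fun g => restr R (U g)) &
        (forall g (a : algC), restr R (U g) = a%:M -> g = 0)] /\
    (* 2. a seed state |e>_R generating an orthonormal basis |g>_R = U^g_R |e>_R *)
    exists e : ket (qubits_of R),
      [/\ (forall g g', dotv (restr R (U g) *m e) (restr R (U g') *m e)
                          = (g == g')%:R),
          (forall v : ket (qubits_of R), exists a : Zgrp (n - k) -> algC,
              v = \sum_g a g *: (restr R (U g) *m e)) &
          (forall g g', restr R (U g) *m (restr R (U g') *m e)
                          = c g g' *: (restr R (U (g + g')) *m e))].
Proof.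
case: hU => U0 UM U_inj U_neqN1.
have [R [L [_ cardR detR]]] := exists_detecting_qubits (letters_mul UM)
  (letters_faithful_commuting U0 UM U_inj U_neqN1).
pose s g := restrict_str R (pletters (U g)).
have rE g : restr R (U g) = pstr_mx (s g) by [].
have sD : {morph s : g h / g + h >-> str_mul g h}.
  by move=> g h; rewrite /s letters_mul // restrict_str_mul.
pose LR (q : qubits_of R) := L (val q).
have s_detect g : g != 0 -> exists q, pauli_anti (LR q) (s g q).
  by move=> /(detR g (in_setT g))[q qR aq]; exists (exist _ q qR); rewrite ffunE.
have cardG : #|Zgrp (n - k)| = hdim (qubits_of R).
  by rewrite hdim_qubits_of cardR cardsT.
exists R; split; first by apply/(@expnI 2) => //; rewrite cardR cardsT card_Zgrp.
exists (fun g g' => str_phase (s g) (s g')); split.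
  split=> [g g' | g g' | g | | g a]; rewrite ?rE.
  - by rewrite pstr_mxM sD.
  - exact: str_phase_root.
  - by rewrite adjmx_pstr pstr_mx_sq.
  - exact: pstr_detected_inj sD s_detect.
  - move=> E; exact: (pstr_detected_scalar s_detect E).
exists (seed LR); split=> [g g' | v | g g'].
- by rewrite !rE; apply: seed_orthonormal.
- exists (fun g => dotv (restr R (U g) *m seed LR) v).
  exact: orthonormal_expansion cardG (seed_orthonormal sD s_detect) v.
- by rewrite !rE mulmxA pstr_mxM sD scalemxAl.
Qed.
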